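(* Let $\Omega\subset\mathbb{R}^d$ be a bounded open set, $T>0$, $T_0\in(0,T)$, $r_0>0$, and $\mathfrak{B}\in L^\infty(0,T;W^{1,\infty}(\mathbb{R}^d)^d)$. Let $\mathcal{O}\subset\mathbb{R}^d$ be a nonempty open set with bounded boundary, and assume that $(T,T_0,r_0,\mathfrak{B},\Omega)$ satisfies the flushing condition for $\mathcal{O}$. Then there exists an open set $\mathcal{O}_0$ with $\overline{\mathcal{O}_0}$ compact and contained in $\mathcal{O}$ such that $(T,T_0,r_0/2,\mathfrak{B},\Omega)$ satisfies the flushing condition for $\mathcal{O}_0$.
   Context: $\Phi(t,t_0,x_0)$ denotes the solution of $\frac{d}{dt}\Phi(t,t_0,x_0)=\mathfrak{B}(\Phi(t,t_0,x_0),t)$, $\Phi(t_0,t_0,x_0)=x_0$, for $t,t_0\in[0,T]$. For a nonempty open $\mathcal{O}\subset\mathbb{R}^d$ and $r>0$, we say $(T,T_0,r,\mathfrak{B},\Omega)$ satisfies the flushing condition for $\mathcal{O}$ if: for all $x_0\in\overline{\Omega}$ and all $t_0\in[T_0,T]$ there exists $t\in(t_0-T_0,t_0)$ such that $\Phi(t,t_0,x)\in\mathcal{O}$ for all $x\in\overline{B}(x_0,r)$. *)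

From HB Require Import structures.
From mathcomp Require Import all_boot all_order all_algebra.
From mathcomp Require Import all_classical all_reals all_analysis.
Set Implicit Arguments. Unset Strict Implicit. Unset Printing Implicit Defensive.
Import Order.TTheory GRing.Theory Num.Theory.
Import numFieldNormedType.Exports.
Local Open Scope classical_set_scope.
Local Open Scope ring_scope.

Definition ointegral (R : realType) (a b : R) (f : R -> R) : R :=
  if a <= b then \int[@lebesgue_measure R]_(s in `[a, b]) f s
  else - \int[@lebesgue_measure R]_(s in `[b, a]) f s.

Definition euclid_cball (R : realType) (d : nat) (x0 : 'rV[R]_d) (r : R)
  : set 'rV[R]_d :=
  [set y | \sum_(i < d) (y ord0 i - x0 ord0 i) ^+ 2 <= r ^+ 2].

(* B in L^oo(0,T; W^{1,oo}(R^d)^d), represented (Caratheodory) by a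
   representative B : R^d -> R -> R^d which is measurable in t for every x,
   bounded on R^d x [0,T] and Lipschitz in x uniformly in t in [0,T]. *)
Definition Linf_W1inf (R : realType) (d : nat) (T : R)
  (B : 'rV[R]_d -> R -> 'rV[R]_d) : Prop :=
  [/\ (forall (x : 'rV[R]_d) (i : 'I_d),
          measurable_fun `[0, T] (fun t => B x t ord0 i)),
      (exists M : R, forall x t, 0 <= t <= T -> `|B x t| <= M) &
      (exists L : R, forall x y t, 0 <= t <= T ->
          `|B x t - B y t| <= L * `|x - y|)].

(* Phi is the flow of  d/dt Phi(t,t0,x) = B(Phi(t,t0,x),t), Phi(t0,t0,x)=x,
   for t, t0 in [0,T]: Caratheodory solution, i.e. continuous in t and
   satisfying the integral equation (componentwise). *)
Definition is_flow (R : realType) (d : nat) (T : R)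
  (B : 'rV[R]_d -> R -> 'rV[R]_d) (Phi : R -> R -> 'rV[R]_d -> 'rV[R]_d)
  : Prop :=
  (forall t0 x, 0 <= t0 <= T ->
     {within `[0, T], continuous (fun t => Phi t t0 x)}) /\
  (forall t0 t x (i : 'I_d), 0 <= t0 <= T -> 0 <= t <= T ->
     Phi t t0 x ord0 i
     = x ord0 i + ointegral t0 t (fun s => B (Phi s t0 x) s ord0 i)).

Definition flushing (R : realType) (d : nat) (T T0 r : R)
  (Phi : R -> R -> 'rV[R]_d -> 'rV[R]_d) (Omega O : set 'rV[R]_d) : Prop :=
  forall x0 t0, closure Omega x0 -> T0 <= t0 <= T ->
    exists t, t0 - T0 < t < t0 /\
      forall x, euclid_cball x0 r x -> O (Phi t t0 x).

From HB Require Import structures.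
From mathcomp Require Import all_boot all_order all_algebra.
From mathcomp Require Import all_classical all_reals all_analysis.
From mathcomp Require Import ring lra.
Import Order.TTheory GRing.Theory Num.Theory.
Import numFieldNormedType.Exports.
Local Open Scope classical_set_scope.
Local Open Scope ring_scope.

(* Let S be the set of points Phi(t, t0, x) with |x - x0| <= r0/2 in the
   Euclidean sense, where x0, t0, t range over the data that the flushing
   condition for O provides.  Gronwall's inequality makes every Phi(t, t0, .)
   a bijection whose inverse Phi(t0, t, .) is C-Lipschitz, with C depending
   only on T and the Lipschitz constant of B; hence a point within eps of S is
   the image of a point of the ball of radius r0 about x0, and so lies in O,
   once C eps is small compared with r0.  S is bounded because Omega is and the
   flow moves points by at most M T, so O0 := the eps/2-neighbourhood of S has
   compact closure inside O.
   Gronwall is used in a derivative-free form: a continuous D >= 0 with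
   D b <= D a + K (max of D between a and b) |b - a| at most doubles over any
   time step of length 1/(2K).  Since the flow is only a Caratheodory solution,
   the integrand B(g(s), s) of a continuous g must be shown measurable; it is
   the pointwise limit of its values with g frozen on a grid. *)

Section mx_norm_entries.
Context {K : realDomainType} {m n : nat}.

Lemma mx_norm_entry_le (A : 'M[K]_(m, n)) i j : `|A i j| <= `|A|.
Proof.
have -> : `|A| = mx_norm A by [].
by rewrite mx_normrE; apply/bigmax_geP; right; exists (i, j).
Qed.

Lemma mx_norm_entryB_le (A B : 'M[K]_(m, n)) i j : `|A i j - B i j| <= `|A - B|.
Proof. by have := mx_norm_entry_le (A - B) i j; rewrite !mxE. Qed.

Lemma mx_norm_le_entries (A : 'M[K]_(m, n)) c :
  0 <= c -> (forall i j, `|A i j| <= c) -> `|A| <= c.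
Proof.
move=> c_ge0 Ac; have -> : `|A| = mx_norm A by [].
rewrite mx_normrE.
by apply: bigmax_le => // -[i j] _; exact: Ac.
Qed.

End mx_norm_entries.

Definition floor_grid {R : realType} (n : nat) (s : R) : R :=
  (Num.truncn (s * n.+1%:R))%:R / n.+1%:R.

Lemma floor_grid_approx {R : realType} n (s : R) : 0 <= s ->
  0 <= floor_grid n s <= s /\ s - floor_grid n s <= n.+1%:R^-1.
Proof.
move=> s_ge0; have N_gt0 : 0 < n.+1%:R :> R by [].
have /andP[lo hi] := truncn_itv (mulr_ge0 s_ge0 (ltW N_gt0)).
rewrite /floor_grid; split; first by rewrite divr_ge0 //= ler_pdivrMr.
have : s <= (Num.truncn (s * n.+1%:R)).+1%:R / n.+1%:R.
  by rewrite ler_pdivlMr // ltW.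
by rewrite -natr1 mulrDl mul1r lerBlDl addrC.
Qed.

Section caratheodory_measurable.
Context {R : realType} {d : nat} {T L : R} {B : 'rV[R]_d -> R -> 'rV[R]_d}.
Hypothesis B_meas : forall x i, measurable_fun `[0, T] (fun t => B x t ord0 i).
Hypothesis B_lip : forall x y t, 0 <= t <= T -> `|B x t - B y t| <= L * `|x - y|.

Lemma measurable_fun_B_grid (g : R -> 'rV[R]_d) n i :
  measurable_fun `[0, T] (fun s => B (g (floor_grid n s)) s ord0 i).
Proof.
set N : R := n.+1%:R; have N_gt0 : 0 < N by [].
pose E k := `[0, T] `&` [set s : R | Num.truncn (s * N) = k].
have EE k : E k = `[0, T] `&` `[k%:R / N, k.+1%:R / N[.
  apply/seteqP; split => s /= [sT sk]; split => //;
    have s_ge0 : 0 <= s by move: sT; rewrite /= in_itv /= => /andP[].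
    move: (truncn_itv (mulr_ge0 s_ge0 (ltW N_gt0))); rewrite sk => /andP[lo hi].
    by rewrite in_itv /= ler_pdivrMr // ltr_pdivlMr // lo hi.
  by apply: truncn_def; move: sk; rewrite /= in_itv /= ler_pdivrMr // ltr_pdivlMr.
have mE k : measurable (E k) by rewrite EE; exact: measurableI.
have -> : `[0, T]%classic = \bigcup_k E k :> set R.
  by apply/seteqP; split => [s sT|s [k _ []//]]; exists (Num.truncn (s * N)).
apply/(measurable_fun_bigcup _ mE) => k.
apply: (eq_measurable_fun (fun s => B (g (k%:R / N)) s ord0 i)).
  by move=> s; rewrite inE => -[_ /= sk]; rewrite /floor_grid -/N sk.
by apply: measurable_funS (B_meas _ _) => // s [].
Qed.

Lemma measurable_fun_B_continuous (g : R -> 'rV[R]_d) i :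
  {within `[0, T], continuous g} ->
  measurable_fun `[0, T] (fun s => B (g s) s ord0 i).
Proof.
move=> g_cont.
apply: (@measurable_realfun.measurable_fun_cvg _ _ _ _
  (fun n s => B (g (floor_grid n s)) s ord0 i)).
  by move=> n; exact: measurable_fun_B_grid.
move=> s sT; have /andP[s_ge0 s_leT] : 0 <= s <= T by move: sT; rewrite /= in_itv.
apply/cvgrPdist_lt => e e_gt0.
have L1_gt0 : 0 < `|L| + 1 by rewrite ltr_wpDl.
have /cvgrPdist_lt/(_ (e / (`|L| + 1)))[|del del_gt0 g_near] :=
  (subspace_continuousP _ g).1 g_cont s sT; first by rewrite divr_gt0.
near=> n.
have [/andP[grid_ge0 grid_le] grid_close] := floor_grid_approx n s s_ge0.
have gridT : `[0, T]%classic (floor_grid n s).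
  by rewrite /= in_itv /= grid_ge0 (le_trans grid_le).
have grid_ball : ball s del (floor_grid n s).
  rewrite /ball /= ger0_norm ?subr_ge0 //; apply: le_lt_trans grid_close _.
  by near: n; exact: (near_infty_natSinv_lt (PosNum del_gt0)).
have g_close := g_near _ grid_ball gridT.
apply: le_lt_trans (mx_norm_entryB_le _ _ _ _) _.
apply: le_lt_trans (B_lip _ _ _ _) _; first by rewrite s_ge0.
apply: (@le_lt_trans _ _ ((`|L| + 1) * `|g s - g (floor_grid n s)|)).
  by rewrite ler_wpM2r // (le_trans (ler_norm L)) // lerDl.
by rewrite mulrC -ltr_pdivlMr.
Unshelve. all: by end_near.
Qed.

End caratheodory_measurable.

Section interval_integrals.
Context {R : realType}.
Notation mu := (@lebesgue_measure R).

Lemma integrable_itv_bounded {f : R -> R} {a b M : R} :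
  measurable_fun (`[a, b] : set R) f -> (forall x, a <= x <= b -> `|f x| <= M) ->
  mu.-integrable `[a, b] (EFin \o f).
Proof.
move=> mf fM; apply: measurable_bounded_integrable => //.
  change (lebesgue_measure (`[a, b]%classic : set R) < +oo)%E.
  by rewrite lebesgue_measure_itv; case: ifP => _ //=; rewrite ltry.
exists M; split; first exact: num_real.
by move=> y My x; rewrite /= in_itv /= => /fM/le_trans; apply; exact: ltW.
Qed.

Lemma Rintegral_itv_dist_le (f g : R -> R) a b M m : a <= b ->
  measurable_fun (`[a, b] : set R) f -> measurable_fun (`[a, b] : set R) g ->
  (forall x, a <= x <= b -> `|f x| <= M) ->
  (forall x, a <= x <= b -> `|g x| <= M) ->
  (forall x, a <= x <= b -> `|f x - g x| <= m) ->
  `|\int[mu]_(s in `[a, b]) f s - \int[mu]_(s in `[a, b]) g s| <= m * (b - a).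
Proof.
move=> ab mf mg fM gM fgm.
have mu_ab : fine (mu `[a, b]%classic) = b - a.
  change (fine (lebesgue_measure (`[a, b]%classic : set R)) = b - a).
  rewrite lebesgue_measure_itv /= lte_fin.
  case: ltP => [_|ba]; first by rewrite -EFinD.
  have -> : b = a by apply/le_anti; rewrite ab ba.
  by rewrite subrr.
have Im : mu.-integrable `[a, b] (EFin \o cst m).
  by apply: (integrable_itv_bounded (M := `|m|)) => //; exact: measurable_cst.
have one_side (u v : R -> R) : measurable_fun (`[a, b] : set R) u ->
    measurable_fun (`[a, b] : set R) v -> (forall x, a <= x <= b -> `|u x| <= M) ->
    (forall x, a <= x <= b -> `|v x| <= M) ->
    (forall x, a <= x <= b -> `|u x - v x| <= m) ->
    \int[mu]_(s in `[a, b]) u s - \int[mu]_(s in `[a, b]) v s <= m * (b - a).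
  move=> u_meas v_meas uM vM uvm.
  have Iu := integrable_itv_bounded u_meas uM.
  have Iv := integrable_itv_bounded v_meas vM.
  have muv := measurable_realfun.measurable_funB u_meas v_meas.
  have Iuv := integrable_itv_bounded muv uvm.
  rewrite -mu_ab -Rintegral_cst // -RintegralB //.
  by apply: le_Rintegral => // x; rewrite /= in_itv /= => /uvm/ler_normlP[].
rewrite ler_norml one_side // lerNl opprB andbT one_side // => x /fgm.
by rewrite distrC.
Qed.

Lemma ointegralE {f : R -> R} {T M a b : R} : measurable_fun (`[0, T] : set R) f ->
  (forall x, 0 <= x <= T -> `|f x| <= M) -> 0 <= a <= T -> 0 <= b <= T ->
  ointegral a b f
  = parameterized_integral mu 0 b f - parameterized_integral mu 0 a f.
Proof.
move=> mf fM /andP[a_ge0 a_leT] /andP[b_ge0 b_leT].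
have IT := integrable_itv_bounded mf fM.
have IS (i : interval R) : [set` i] `<=` `[0, T] ->
    mu.-integrable [set` i] (EFin \o f).
  by move=> iT; exact: integrableS IT.
have itvE u v : 0 <= u -> u <= v -> v <= T -> \int[mu]_(s in `[u, v]) f s
    = parameterized_integral mu 0 v f - parameterized_integral mu 0 u f.
  move=> u0 uv vT; rewrite /parameterized_integral.
  rewrite (Rintegral_itvB (a := BLeft 0) (b := BRight v) (x := u)); last 3 first.
  - by apply: IS => x /=; rewrite !in_itv /= => /andP[? ?]; apply/andP; split; lra.
  - by rewrite bnd_simp.
  - by rewrite bnd_simp.
  rewrite Rintegral_itv_obnd_cbnd //.
  by apply: IS => x /=; rewrite !in_itv /= => /andP[? ?]; apply/andP; split; lra.
rewrite /ointegral; case: ifPn => [ab|]; first exact: itvE.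
by rewrite -ltNge => ba; rewrite itvE ?opprB //; lra.
Qed.

Lemma ointegralxx (f : R -> R) a : ointegral a a f = 0.
Proof. by rewrite /ointegral lexx set_itv1 Rintegral_set1. Qed.

Lemma ointegral_chasles {f : R -> R} {T M a b c : R} :
  measurable_fun (`[0, T] : set R) f -> (forall x, 0 <= x <= T -> `|f x| <= M) ->
  0 <= a <= T -> 0 <= b <= T -> 0 <= c <= T ->
  ointegral a b f + ointegral b c f = ointegral a c f.
Proof.
by move=> mf fM aT bT cT; rewrite !(ointegralE mf fM) //; ring.
Qed.

Lemma ointegral_dist_le {f g : R -> R} {T M m a b : R} :
  measurable_fun (`[0, T] : set R) f -> measurable_fun (`[0, T] : set R) g ->
  (forall x, 0 <= x <= T -> `|f x| <= M) ->
  (forall x, 0 <= x <= T -> `|g x| <= M) ->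
  0 <= a <= T -> 0 <= b <= T ->
  (forall r, (a <= r <= b) || (b <= r <= a) -> `|f r - g r| <= m) ->
  `|ointegral a b f - ointegral a b g| <= m * `|b - a|.
Proof.
move=> mf mg fM gM /andP[a_ge0 a_leT] /andP[b_ge0 b_leT] fgm.
have itvT u v : 0 <= u -> v <= T -> `[u, v]%classic `<=` `[0, T].
  by move=> u0 vT x /=; rewrite !in_itv /= => /andP[? ?]; apply/andP; split; lra.
have inT u v x : 0 <= u -> v <= T -> u <= x <= v -> 0 <= x <= T.
  by move=> u0 vT /andP[? ?]; apply/andP; split; lra.
rewrite /ointegral; case: ifPn => [ab|].
  rewrite [`|b - a|]ger0_norm ?subr_ge0 //.
  apply: (Rintegral_itv_dist_le _ _ _ _ M) => //.
  - exact: measurable_funS (itvT _ _ a_ge0 b_leT) mf.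
  - exact: measurable_funS (itvT _ _ a_ge0 b_leT) mg.
  - by move=> x /(inT _ _ _ a_ge0 b_leT)/fM.
  - by move=> x /(inT _ _ _ a_ge0 b_leT)/gM.
  - by move=> x xab; apply: fgm; rewrite xab.
rewrite -ltNge => /ltW ba.
rewrite opprK addrC distrC [`|b - a|]distrC [`|a - b|]ger0_norm ?subr_ge0 //.
apply: (Rintegral_itv_dist_le _ _ _ _ M) => //.
- exact: measurable_funS (itvT _ _ b_ge0 a_leT) mf.
- exact: measurable_funS (itvT _ _ b_ge0 a_leT) mg.
- by move=> x /(inT _ _ _ b_ge0 a_leT)/fM.
- by move=> x /(inT _ _ _ b_ge0 a_leT)/gM.
- by move=> x xba; apply: fgm; rewrite xba orbT.
Qed.

Lemma between_itv {T a b r : R} : 0 <= a <= T -> 0 <= b <= T ->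
  (a <= r <= b) || (b <= r <= a) -> 0 <= r <= T.
Proof. by move=> /andP[? ?] /andP[? ?] /orP[] /andP[? ?]; apply/andP; split; lra. Qed.

Lemma ointegral_norm_le {f : R -> R} {T M a b : R} :
  measurable_fun (`[0, T] : set R) f ->
  (forall x, 0 <= x <= T -> `|f x| <= M) -> 0 <= a <= T -> 0 <= b <= T ->
  `|ointegral a b f| <= M * `|b - a|.
Proof.
move=> mf fM aT bT; have M_ge0 : 0 <= M := le_trans (normr_ge0 _) (fM _ aT).
have ointegral0 : ointegral a b (cst 0) = 0.
  by rewrite /ointegral; case: ifP => _; rewrite Rintegral_cst // mul0r ?oppr0.
rewrite -[ointegral a b f]subr0 -ointegral0.
apply: (ointegral_dist_le mf (measurable_cst _) fM) => // [x _|r rab].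
  by rewrite normr0.
by rewrite subr0; exact: fM (between_itv aT bT rab).
Qed.

End interval_integrals.

Definition doubling_factor {R : realType} (T K : R) : R :=
  2 ^+ (Num.truncn (T * (2 * K))).+1.

Section doubling.
Context {R : realType} {T K : R} {D : R -> R}.
Hypothesis K_gt0 : 0 < K.
Hypothesis D_ge0 : forall r, 0 <= D r.
Hypothesis D_cont : {within `[0, T], continuous D}.
Hypothesis D_growth : forall a b m, 0 <= a <= T -> 0 <= b <= T ->
  (forall r, (a <= r <= b) || (b <= r <= a) -> D r <= m) ->
  D b <= D a + K * m * `|b - a|.

Lemma doubling_short_itv lo hi a s : 0 <= lo -> lo <= hi -> hi <= T ->
  hi - lo <= (2 * K)^-1 -> lo <= a <= hi -> lo <= s <= hi -> D s <= 2 * D a.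
Proof.
move=> lo_ge0 lohi hiT hilo /andP[a1 a2] /andP[s1 s2].
have D_cont' : {within `[lo, hi], continuous D}.
  apply: continuous_subspaceW D_cont => x /=; rewrite !in_itv /= => /andP[? ?].
  by apply/andP; split; lra.
(* the growth estimate at a maximiser c of D on [lo, hi] absorbs half of D c *)
have [c /[!in_itv]/= /andP[c1 c2] c_max] := EVT_max lohi D_cont'.
have Ds : D s <= D c by apply: c_max; rewrite in_itv /= s1 s2.
have Dc : D c <= D a + K * D c * `|c - a|.
  apply: D_growth; [apply/andP; split; lra|apply/andP; split; lra|].
  move=> r /orP[] /andP[r1 r2]; apply: c_max; rewrite in_itv /=.
    by apply/andP; split; lra.
  by apply/andP; split; lra.
have : K * D c * `|c - a| <= D c / 2.
  have ca : `|c - a| <= (2 * K)^-1 by rewrite ler_norml; apply/andP; split; lra.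
  apply: le_trans (ler_wpM2l _ ca) _; first by rewrite mulr_ge0 // ltW.
  rewrite (_ : K * D c * (2 * K)^-1 = D c / 2) //.
  by field; exact: lt0r_neq0.
lra.
Qed.

Lemma doubling_step a s : 0 <= a <= T -> 0 <= s <= T ->
  `|s - a| <= (2 * K)^-1 -> D s <= 2 * D a.
Proof.
move=> /andP[a0 aT] /andP[s0 sT]; rewrite ler_norml => /andP[sa1 sa2].
have [as_|sa] := leP a s.
  by apply: (@doubling_short_itv a s); rewrite ?lexx ?as_ //; lra.
by apply: (@doubling_short_itv s a); rewrite ?lexx ?(ltW sa) //; lra.
Qed.

Lemma doubling_iter k a s : 0 <= a <= T -> 0 <= s <= T ->
  `|s - a| <= k.+1%:R / (2 * K) -> D s <= 2 ^+ k.+1 * D a.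
Proof.
move=> aT sT sa.
pose p j := a + j%:R / k.+1%:R * (s - a).
have pT j : (j <= k.+1)%N -> 0 <= p j <= T.
  move=> jk; rewrite /p; set l := j%:R / k.+1%:R.
  have l0 : 0 <= l by rewrite divr_ge0.
  have l1 : l <= 1 by rewrite ler_pdivrMr // mul1r ler_nat.
  move: aT sT => /andP[a0 aT] /andP[s0 sT].
  have l1' : 0 <= 1 - l by rewrite subr_ge0.
  have sT' : 0 <= T - s by rewrite subr_ge0.
  have aT' : 0 <= T - a by rewrite subr_ge0.
  have := mulr_ge0 l0 s0; have := mulr_ge0 l1' a0.
  have := mulr_ge0 l0 sT'; have := mulr_ge0 l1' aT'.
  by move=> *; apply/andP; split; nra.
have p_step j : (j < k.+1)%N -> D (p j.+1) <= 2 * D (p j).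
  move=> jk; apply: doubling_step; [exact: pT (ltnW jk)|exact: pT|].
  have -> : p j.+1 - p j = (s - a) / k.+1%:R by rewrite /p -natr1; field.
  by rewrite normrM normfV normr_nat ler_pdivrMr // mulrC.
have Dp j : (j <= k.+1)%N -> D (p j) <= 2 ^+ j * D a.
  elim: j => [_|j IH jk]; first by rewrite /p !mul0r addr0 expr0 mul1r.
  apply: le_trans (p_step j jk) _.
  by rewrite exprS -mulrA ler_wpM2l // IH // ltnW.
have pk : p k.+1 = s by rewrite /p divff // mul1r addrC subrK.
by have := Dp k.+1 (leqnn _); rewrite pk.
Qed.

Lemma doubling_bound a s : 0 <= a <= T -> 0 <= s <= T ->
  D s <= doubling_factor T K * D a.
Proof.
move=> aT sT; apply: doubling_iter => //.
have : T <= (Num.truncn (T * (2 * K))).+1%:R / (2 * K).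
  by rewrite ler_pdivlMr ?mulr_gt0 // ltW // truncnS_gt.
move: aT sT => /andP[? ?] /andP[? ?] ?.
by rewrite ler_norml; apply/andP; split; lra.
Qed.

End doubling.

Definition is_solution {R : realType} {d : nat} (T : R)
  (B : 'rV[R]_d -> R -> 'rV[R]_d) (g : R -> 'rV[R]_d) : Prop :=
  {within `[0, T], continuous g} /\
  forall a s i, 0 <= a <= T -> 0 <= s <= T ->
    g s ord0 i - g a ord0 i = ointegral a s (fun r => B (g r) r ord0 i).

Section caratheodory_flow.
Context {R : realType} {d : nat} {T L M : R} {B : 'rV[R]_d -> R -> 'rV[R]_d}.
Hypothesis L_gt0 : 0 < L.
Hypothesis B_lip : forall x y t, 0 <= t <= T -> `|B x t - B y t| <= L * `|x - y|.
Hypothesis B_bound : forall x t, 0 <= t <= T -> `|B x t| <= M.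
Hypothesis B_meas : forall x i, measurable_fun `[0, T] (fun t => B x t ord0 i).

Lemma B_entry_bound (g : R -> 'rV[R]_d) i r :
  0 <= r <= T -> `|B (g r) r ord0 i| <= M.
Proof.
by move=> rT; exact: le_trans (mx_norm_entry_le _ ord0 i) (B_bound (g r) r rT).
Qed.

Lemma solution_dist_growth g1 g2 a s m :
  is_solution T B g1 -> is_solution T B g2 -> 0 <= a <= T -> 0 <= s <= T ->
  (forall r, (a <= r <= s) || (s <= r <= a) -> `|g1 r - g2 r| <= m) ->
  `|g1 s - g2 s| <= `|g1 a - g2 a| + L * m * `|s - a|.
Proof.
move=> [g1_cont g1_int] [g2_cont g2_int] aT sT g12m.
have m_ge0 : 0 <= m.
  by apply: le_trans (normr_ge0 _) (g12m a _); rewrite !lexx /= andbT le_total.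
apply: mx_norm_le_entries => [|i j]; first by rewrite addr_ge0 // !mulr_ge0 // ltW.
rewrite [i]ord1 !mxE.
have -> : g1 s ord0 j - g2 s ord0 j = (g1 a ord0 j - g2 a ord0 j) +
    (ointegral a s (fun r => B (g1 r) r ord0 j)
     - ointegral a s (fun r => B (g2 r) r ord0 j)).
  by move: (g1_int a s j aT sT) (g2_int a s j aT sT); lra.
apply: le_trans (ler_normD _ _) _; apply: lerD; first exact: mx_norm_entryB_le.
apply: (ointegral_dist_le (T := T) (M := M)) => //.
- exact: measurable_fun_B_continuous B_meas B_lip _ _ g1_cont.
- exact: measurable_fun_B_continuous B_meas B_lip _ _ g2_cont.
- by move=> r; exact: B_entry_bound.
- by move=> r; exact: B_entry_bound.
move=> r ras; have rT := between_itv aT sT ras.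
apply: le_trans (mx_norm_entryB_le _ _ _ _) _; apply: le_trans (B_lip _ _ _ rT) _.
by rewrite ler_wpM2l ?g12m // ltW.
Qed.

Lemma solution_dist_le g1 g2 a s :
  is_solution T B g1 -> is_solution T B g2 -> 0 <= a <= T -> 0 <= s <= T ->
  `|g1 s - g2 s| <= doubling_factor T L * `|g1 a - g2 a|.
Proof.
move=> sol1 sol2 aT sT.
have dist_cont : {within `[0, T], continuous (fun r => `|g1 r - g2 r|)}.
  apply/subspace_continuousP => x xT; apply: cvg_norm; apply: cvgB.
  - exact: (subspace_continuousP _ _).1 sol1.1 x xT.
  - exact: (subspace_continuousP _ _).1 sol2.1 x xT.
apply: (doubling_bound L_gt0 _ dist_cont) => // a' b' m aT' bT'.
exact: solution_dist_growth.
Qed.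

Context {Phi : R -> R -> 'rV[R]_d -> 'rV[R]_d}.
Hypothesis Phi_flow : is_flow T B Phi.

Lemma flow_id t0 x : 0 <= t0 <= T -> Phi t0 t0 x = x.
Proof.
move=> t0T; apply/rowP => i; have [_ Phi_int] := Phi_flow.
by rewrite (Phi_int t0 t0 x i) // ointegralxx addr0.
Qed.

Lemma flow_solution t0 x : 0 <= t0 <= T -> is_solution T B (fun t => Phi t t0 x).
Proof.
move=> t0T; have [Phi_cont Phi_int] := Phi_flow; split; first exact: Phi_cont.
move=> a s i aT sT; rewrite !(Phi_int t0 _ x i) //.
have mF := measurable_fun_B_continuous B_meas B_lip _ i (Phi_cont t0 x t0T).
rewrite -(ointegral_chasles mF (B_entry_bound (fun t => Phi t t0 x) i) t0T aT sT).
by ring.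
Qed.

Lemma flow_inverse t0 t z : 0 <= t0 <= T -> 0 <= t <= T ->
  Phi t t0 (Phi t0 t z) = z.
Proof.
move=> t0T tT.
(* both sides solve the equation and agree at time t0 *)
have := solution_dist_le _ _ t0 t (flow_solution t z tT)
  (flow_solution t0 (Phi t0 t z) t0T) t0T tT.
rewrite /= !flow_id // subrr normr0 mulr0 normr_le0 subr_eq0 => /eqP.
by move <-.
Qed.

Lemma flow_dist_le t0 t x w : 0 <= t0 <= T -> 0 <= t <= T ->
  `|x - w| <= doubling_factor T L * `|Phi t t0 x - Phi t t0 w|.
Proof.
move=> t0T tT.
have := solution_dist_le _ _ t t0
  (flow_solution t0 x t0T) (flow_solution t0 w t0T) tT t0T.
by rewrite /= !flow_id.
Qed.

Lemma flow_displacement_le t0 t x : 0 <= t0 <= T -> 0 <= t <= T ->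
  `|Phi t t0 x - x| <= M * `|t - t0|.
Proof.
move=> t0T tT; have [Phi_cont Phi_int] := Phi_flow.
have M_ge0 : 0 <= M := le_trans (normr_ge0 _) (B_bound 0 t0 t0T).
apply: mx_norm_le_entries => [|i j]; first by rewrite mulr_ge0.
rewrite [i]ord1 !mxE (Phi_int t0 t x j) // addrAC subrr add0r.
apply: (ointegral_norm_le _ _ t0T tT).
- exact: measurable_fun_B_continuous B_meas B_lip _ j (Phi_cont t0 x t0T).
- exact: B_entry_bound (fun t => Phi t t0 x) j.
Qed.

End caratheodory_flow.

Section euclid_cball_sup_norm.
Context {R : realType} {d : nat}.

Lemma euclid_cball_norm_le {x0 x : 'rV[R]_d} {r : R} :
  0 <= r -> euclid_cball x0 r x -> `|x - x0| <= r.
Proof.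
move=> r_ge0 x_in; apply: mx_norm_le_entries => // i j; rewrite [i]ord1 !mxE.
have : (x ord0 j - x0 ord0 j) ^+ 2 <= r ^+ 2.
  apply: le_trans x_in; rewrite (bigD1 j) //= lerDl.
  by apply: sumr_ge0 => k _; exact: sqr_ge0.
by move=> sq; rewrite ler_norml; apply/andP; split; nra.
Qed.

Lemma euclid_cball_widen (x0 x w : 'rV[R]_d) r : 0 <= r ->
  euclid_cball x0 (r / 2) x -> `|w - x| < r / (2 * (d%:R + 1)) ->
  euclid_cball x0 r w.
Proof.
move=> r_ge0 x_in; set eta := r / _ => wx.
have eta_ge0 : 0 <= eta by rewrite divr_ge0 // mulr_ge0 // addr_ge0.
have etaE : eta * (2 * (d%:R + 1)) = r.
  by rewrite /eta mulfVK // mulf_neq0 // lt0r_neq0 // ltr_wpDl.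
have d_eta_ge0 : 0 <= d%:R * eta by rewrite mulr_ge0.
have d_eta2 : d%:R * eta ^+ 2 <= (r / 2) ^+ 2.
  by rewrite expr2 mulrA [X in _ <= X]expr2 ler_pM //; lra.
(* (a + b)^2 <= 2 a^2 + 2 b^2 with a = w - x, |a| < eta *)
have entry_le i : (w ord0 i - x0 ord0 i) ^+ 2
    <= 2 * eta ^+ 2 + 2 * (x ord0 i - x0 ord0 i) ^+ 2.
  have := le_lt_trans (mx_norm_entryB_le w x ord0 i) wx.
  rewrite ltr_norml => /andP[lo hi].
  have := sqr_ge0 (w ord0 i - x ord0 i - (x ord0 i - x0 ord0 i)).
  nra.
rewrite /euclid_cball /=; apply: le_trans (ler_sum _ (fun i _ => entry_le i)) _.
rewrite big_split /= sumr_const card_ord -mulr_sumr -mulr_natl.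
move: x_in; rewrite /euclid_cball /=; set S := \sum_(i < d) _ => x_in.
nra.
Qed.

End euclid_cball_sup_norm.

Section thickening.
Context {R : realFieldType} {V : normedModType R}.

Definition thicken (A : set V) (e : R) : set V := \bigcup_(y in A) ball y e.

Lemma open_thicken A e : open (thicken A e).
Proof. by apply: bigcup_open => y _; exact: ball_open. Qed.

Lemma thickenP A e p : thicken A e p <-> exists2 y, A y & `|y - p| < e.
Proof. by rewrite /thicken -ball_normE; split => -[y Ay yp]; exists y. Qed.

Lemma closure_thicken A e e' :
  0 < e' -> closure (thicken A e) `<=` thicken A (e + e').
Proof.
move=> e'_gt0 p /(_ _ (nbhsx_ballx p e' e'_gt0)) [q [[y Ay yq] pq]].
by exists y => //; exact: ball_triangle yq (ball_sym pq).
Qed.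

Lemma closure_sub_thicken A e : 0 < e -> closure A `<=` thicken A e.
Proof.
move=> e_gt0 p /(_ _ (nbhsx_ballx p e e_gt0)) [q [Aq pq]].
by exists q => //; exact: ball_sym.
Qed.

Lemma bounded_thicken A e : bounded_set A -> bounded_set (thicken A e).
Proof.
move=> [M [_ AM]]; exists (M + e); split; first exact: num_real.
move=> N MeN p /thickenP[y Ay yp] /=.
have /= := AM (N - e) ltac:(lra) y Ay.
have := ler_normD y (p - y); rewrite addrC subrK distrC; lra.
Qed.

Lemma subset_bounded {A A' : set V} : A `<=` A' -> bounded_set A' -> bounded_set A.
Proof.
move=> AA'; apply: (@sub_boundedr _ R V (globally A) (globally A')).
by move=> P A'P x /AA'/A'P.
Qed.

End thickening.

Section flushing_shrink.
Context {R : realType} {d : nat} {T T0 C M r0 : R}.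
Context {Phi : R -> R -> 'rV[R]_d -> 'rV[R]_d} {Omega O : set 'rV[R]_d}.
Hypothesis C_gt0 : 0 < C.
Hypothesis M_ge0 : 0 <= M.
Hypothesis r0_gt0 : 0 < r0.
Hypothesis Phi_inverse : forall t0 t z, 0 <= t0 <= T -> 0 <= t <= T ->
  Phi t t0 (Phi t0 t z) = z.
Hypothesis Phi_dist : forall t0 t x w, 0 <= t0 <= T -> 0 <= t <= T ->
  `|x - w| <= C * `|Phi t t0 x - Phi t t0 w|.
Hypothesis Phi_displacement : forall t0 t x, 0 <= t0 <= T -> 0 <= t <= T ->
  `|Phi t t0 x - x| <= M * `|t - t0|.
Hypothesis Omega_bounded : bounded_set Omega.
Hypothesis O_flushing : flushing T T0 r0 Phi Omega O.

Definition flushing_time x0 t0 t : Prop :=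
  [/\ closure Omega x0, T0 <= t0 <= T, t0 - T0 < t < t0 &
      euclid_cball x0 r0 `<=` Phi t t0 @^-1` O].

Definition flushed_core : set 'rV[R]_d :=
  [set y | exists x0 t0 t,
    flushing_time x0 t0 t /\ (Phi t t0 @` euclid_cball x0 (r0 / 2)) y].

Lemma flushing_time_itv {x0 t0 t} : flushing_time x0 t0 t ->
  0 <= t0 <= T /\ 0 <= t <= T.
Proof. by case=> _ /andP[? ?] /andP[? ?] _; split; apply/andP; split; lra. Qed.

(* [C * eps] is the sup-norm radius allowed by [euclid_cball_widen] *)
Let eps := r0 / (2 * (d%:R + 1)) / C.

Lemma thicken_flushed_core_sub : thicken flushed_core eps `<=` O.
Proof.
move=> z /thickenP[_ [x0 [t0 [t [ft [x x_in <-]]]]] yz].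
have [t0T tT] := flushing_time_itv ft; case: ft => _ _ _ ball_sub.
rewrite -(Phi_inverse t0 t z t0T tT); apply: ball_sub.
apply: euclid_cball_widen (ltW r0_gt0) x_in _.
rewrite distrC; apply: le_lt_trans (Phi_dist t0 t x _ t0T tT) _.
by rewrite Phi_inverse // mulrC -ltr_pdivlMr.
Qed.

Lemma bounded_flushed_core : bounded_set flushed_core.
Proof.
have core_sub : flushed_core `<=` thicken (closure Omega) (r0 / 2 + M * T + 1).
  move=> _ [x0 [t0 [t [ft [x x_in <-]]]]]; have [t0T tT] := flushing_time_itv ft.
  case: ft => cl_x0 _ _ _; apply/thickenP; exists x0 => //.
  have := euclid_cball_norm_le (divr_ge0 (ltW r0_gt0) (ler0n _ 2)) x_in.
  have := Phi_displacement t0 t x t0T tT.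
  have : M * `|t - t0| <= M * T.
    by rewrite ler_wpM2l // ler_norml; move: t0T tT => /andP[? ?] /andP[? ?]; lra.
  have := ler_normD (x0 - x) (x - Phi t t0 x); rewrite addrA subrK.
  by rewrite [`|x0 - x|]distrC [`|x - Phi _ _ _|]distrC; lra.
have closure_bounded : bounded_set (closure Omega).
  exact: subset_bounded (closure_sub_thicken Omega 1 ltr01)
    (bounded_thicken _ 1 Omega_bounded).
exact: subset_bounded core_sub (bounded_thicken _ _ closure_bounded).
Qed.

Lemma flushing_thicken_core :
  flushing T T0 (r0 / 2) Phi Omega (thicken flushed_core (eps / 2)).
Proof.
move=> x0 t0 cl_x0 t0T; have [t [tt flushed]] := O_flushing x0 t0 cl_x0 t0T.
exists t; split => // x x_in; exists (Phi t t0 x); last first.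
  by apply: ballxx; rewrite !divr_gt0 // mulr_gt0 // ltr_wpDl.
by exists x0, t0, t; split => //; exists x.
Qed.

Lemma flushing_shrink : exists O0 : set 'rV[R]_d,
  [/\ open O0, compact (closure O0), closure O0 `<=` O &
      flushing T T0 (r0 / 2) Phi Omega O0].
Proof.
have eps_gt0 : 0 < eps by rewrite !divr_gt0 // mulr_gt0 // ltr_wpDl.
have closure_sub : closure (thicken flushed_core (eps / 2))
    `<=` thicken flushed_core eps.
  by rewrite {2}(splitr eps); apply: closure_thicken; rewrite divr_gt0.
exists (thicken flushed_core (eps / 2)); split.
- exact: open_thicken.
- apply: bounded_closed_compact; last exact: closed_closure.
  exact: subset_bounded closure_sub (bounded_thicken _ _ bounded_flushed_core).
- exact: subset_trans closure_sub thicken_flushed_core_sub.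
- exact: flushing_thicken_core.
Qed.

End flushing_shrink.

Theorem proposition2p2 (R : realType) (d : nat) (Omega : set 'rV[R]_d)
  (T T0 r0 : R) (B : 'rV[R]_d -> R -> 'rV[R]_d)
  (Phi : R -> R -> 'rV[R]_d -> 'rV[R]_d) (O : set 'rV[R]_d) :
  open Omega -> bounded_set Omega ->
  0 < T -> 0 < T0 < T -> 0 < r0 ->
  Linf_W1inf T B -> is_flow T B Phi ->
  open O -> O !=set0 -> bounded_set (closure O `\` O) ->
  flushing T T0 r0 Phi Omega O ->
  exists O0 : set 'rV[R]_d,
    [/\ open O0, compact (closure O0), closure O0 `<=` O &
        flushing T T0 (r0 / 2) Phi Omega O0].
Proof.
move=> _ Omega_bounded T_gt0 _ r0_gt0 [B_meas [M B_bound] [L' B_lip']]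
  Phi_flow _ _ _ O_flushing.
have [L L_gt0 B_lip] : exists2 L : R, 0 < L &
    forall x y t, 0 <= t <= T -> `|B x t - B y t| <= L * `|x - y|.
  exists (`|L'| + 1) => [|x y t tT]; first by rewrite ltr_wpDl.
  apply: le_trans (B_lip' x y t tT) _.
  by rewrite ler_wpM2r // (le_trans (ler_norm L')) // lerDl.
have M_ge0 : 0 <= M.
  by apply: le_trans (normr_ge0 _) (B_bound 0 0 _); rewrite lexx ltW.
have C_gt0 : 0 < doubling_factor T L by rewrite exprn_gt0.
exact: (flushing_shrink C_gt0 M_ge0 r0_gt0
  (flow_inverse L_gt0 B_lip B_bound B_meas Phi_flow)
  (flow_dist_le L_gt0 B_lip B_bound B_meas Phi_flow)
  (flow_displacement_le B_lip B_bound B_meas Phi_flow)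
  Omega_bounded O_flushing).
Qed.
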